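(* Let $\mathcal U=(V,\tilde V,W,\tilde W,R)$ be an ordered gradient space. The following are equivalent: (a) every pair $u_1,u_2\in V_+$ has a $V_+$-least upper bound; (b) for all $u_1,u_2\in V_+$, $\max(u_1,u_2)$ is the $V_+$-least upper bound of $u_1,u_2$; (c) $V_+$ (with the order $\le$) is a lattice; (d) every pair $u_1,u_2\in V_+$ has a $V_+$-greatest lower bound; (e) for all $u_1,u_2\in V_+$, $\min(u_1,u_2)$ is the $V_+$-greatest lower bound of $u_1,u_2$.
   Context: A gradient space $\mathcal U=(V,\tilde V,W,\tilde W,R)$ consists of vector spaces $\tilde V,\tilde W$ over $\mathbf R$ or $\mathbf C$, a relation $R\subseteq\tilde V\times\tilde W$ closed under addition and under multiplication by positive scalars, and linear subspaces $V\subseteq\tilde V$, $W\subseteq\tilde W$ such that $V$ is a reflexive Banach space (norm $\|\cdot\|_V$), $W$ is a reflexive strictly convex Banach space, for every $(u,g)\in R\cap(V\times W)$ there is $g'\in W$ with $(-u,g')\in R$, and $R\cap(V\times W)$ is closed in $V\times W$. A linear preorder on $\tilde V$ is a relation $\le$ with: $a\le a$; $a\le b,\ b\le c\Rightarrow a\le c$; $b\le c\Rightarrow a+b\le a+c$; $a\le b,\ \alpha\in[0,\infty)\Rightarrow\alpha a\le\alpha b$. A preordered gradient space is a gradient space with a linear preorder $\le$ on $\tilde V$ such that if $u_i\in V$, $\psi\in\tilde V$, $u_i\le\psi$ for all $i$ and $u_i\to u$ in $V$, then $u\le\psi$. An ordered gradient space is a preordered gradient space such that $V$ is strictly convex and,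 for $u,v\in V$, $0\le u\le v$ implies $\|u\|_V\le\|v\|_V$ (then $\le$ is a partial order on $V$). Let $V_+=\{v\in V:v\ge0\}$ and $B_+=\{\psi\in\tilde V:0\le\psi\le u\text{ for some }u\in V\}$. For $\psi_1,\psi_2\in B_+$: $\max(\psi_1,\psi_2)$ is the unique element $u$ of $\Omega(\psi_1,\psi_2)=\{u\in V:u\ge\psi_1,\ u\ge\psi_2\}$ minimizing $\|u\|_V$ over $\Omega(\psi_1,\psi_2)$; $\min(\psi_1,\psi_2)$ is the unique element $u$ of $\Omega'(\psi_1,\psi_2)=\{v\in V:0\le v\le\psi_1,\ v\le\psi_2\}$ minimizing $\|\max(\psi_1,\psi_2)-v\|_V$ over $\Omega'(\psi_1,\psi_2)$ (both exist and are unique). An upper bound $v\in V_+$ of $\psi_1,\psi_2$ is a $V_+$-least upper bound if $v\le u$ for every upper bound $u\in V_+$ of $\psi_1,\psi_2$; $V_+$-greatest lower bounds (lower bounds in $V_+$ that dominate every lower bound in $V_+$) are defined analogously. $V_+$ is a lattice if every pair of elements of $V_+$ has a least upper bound and a greatest lower bound in $V_+$. *)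

From Stdlib Require Import Reals.
Open Scope R_scope.

Record RVectorSpace := {
  vcar :> Type;
  vadd : vcar -> vcar -> vcar;
  vzero : vcar;
  vopp : vcar -> vcar;
  vscal : R -> vcar -> vcar;
  vadd_assoc : forall x y z, vadd x (vadd y z) = vadd (vadd x y) z;
  vadd_comm : forall x y, vadd x y = vadd y x;
  vadd_0 : forall x, vadd x vzero = x;
  vadd_opp : forall x, vadd x (vopp x) = vzero;
  vscal_assoc : forall a b x, vscal a (vscal b x) = vscal (a * b) x;
  vscal_1 : forall x, vscal 1 x = x;
  vscal_distr_l : forall a x y, vscal a (vadd x y) = vadd (vscal a x) (vscal a y);
  vscal_distr_r : forall a b x, vscal (a + b) x = vadd (vscal a x) (vscal b x)
}.

Arguments vadd {_}. Arguments vzero {_}. Arguments vopp {_}. Arguments vscal {_}.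

Definition vsub {X : RVectorSpace} (x y : X) : X := vadd x (vopp y).

(** * A normed linear subspace V of an ambient vector space X,
    given by a membership predicate and a norm (only meaningful on V). *)
Record NormedSubspace (X : RVectorSpace) := {
  ns_mem : X -> Prop;
  ns_norm : X -> R;
  ns_mem_0 : ns_mem vzero;
  ns_mem_add : forall x y, ns_mem x -> ns_mem y -> ns_mem (vadd x y);
  ns_mem_scal : forall a x, ns_mem x -> ns_mem (vscal a x);
  ns_norm_nonneg : forall x, ns_mem x -> 0 <= ns_norm x;
  ns_norm_eq0 : forall x, ns_mem x -> ns_norm x = 0 -> x = vzero;
  ns_norm_scal : forall a x, ns_mem x -> ns_norm (vscal a x) = Rabs a * ns_norm x;
  ns_norm_triangle : forall x y, ns_mem x -> ns_mem y ->
      ns_norm (vadd x y) <= ns_norm x + ns_norm y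
}.

Arguments ns_mem {_}. Arguments ns_norm {_}.

Section NormedNotions.
Context {X : RVectorSpace} (V : NormedSubspace X).

Definition ns_converges (u : nat -> X) (l : X) : Prop :=
  Un_cv (fun n => ns_norm V (vsub (u n) l)) 0.

Definition ns_cauchy (u : nat -> X) : Prop :=
  forall eps, eps > 0 -> exists N, forall n m, (n >= N)%nat -> (m >= N)%nat ->
    ns_norm V (vsub (u n) (u m)) < eps.

Definition is_banach : Prop :=
  forall u : nat -> X, (forall n, ns_mem V (u n)) -> ns_cauchy u ->
    exists l, ns_mem V l /\ ns_converges u l.

(** f is a bounded linear functional on V (element of V*; only its values
    on V matter) *)
Definition is_dual_elem (f : X -> R) : Prop :=
  (forall x y, ns_mem V x -> ns_mem V y -> f (vadd x y) = f x + f y) /\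
  (forall a x, ns_mem V x -> f (vscal a x) = a * f x) /\
  (exists M, forall x, ns_mem V x -> Rabs (f x) <= M * ns_norm V x).

(** Phi is an element of the bidual V**: a bounded linear functional on V*
    (well defined on V*, i.e. depending only on the restriction to V). *)
Definition is_bidual_elem (Phi : (X -> R) -> R) : Prop :=
  (forall f g, is_dual_elem f -> is_dual_elem g ->
     (forall x, ns_mem V x -> f x = g x) -> Phi f = Phi g) /\
  (forall f g, is_dual_elem f -> is_dual_elem g ->
     Phi (fun x => f x + g x) = Phi f + Phi g) /\
  (forall a f, is_dual_elem f -> Phi (fun x => a * f x) = a * Phi f) /\
  (exists C, forall f M, is_dual_elem f ->
     (forall x, ns_mem V x -> Rabs (f x) <= M * ns_norm V x) ->
     Rabs (Phi f) <= C * M).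

Definition is_reflexive : Prop :=
  forall Phi, is_bidual_elem Phi ->
    exists v, ns_mem V v /\ forall f, is_dual_elem f -> Phi f = f v.

Definition is_strictly_convex : Prop :=
  forall x y, ns_mem V x -> ns_mem V y -> ns_norm V x = 1 -> ns_norm V y = 1 ->
    x <> y -> ns_norm V (vscal (1/2) (vadd x y)) < 1.

End NormedNotions.

Record GradientSpace := {
  gVt : RVectorSpace;
  gWt : RVectorSpace;
  gV : NormedSubspace gVt;
  gW : NormedSubspace gWt;
  grel : gVt -> gWt -> Prop;
  grel_add : forall u g u' g', grel u g -> grel u' g' -> grel (vadd u u') (vadd g g');
  grel_scal : forall a u g, a > 0 -> grel u g -> grel (vscal a u) (vscal a g);
  gV_banach : is_banach gV;
  gV_reflexive : is_reflexive gV;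
  gW_banach : is_banach gW;
  gW_reflexive : is_reflexive gW;
  gW_strictly_convex : is_strictly_convex gW;
  grel_neg : forall u g, ns_mem gV u -> ns_mem gW g -> grel u g ->
    exists g', ns_mem gW g' /\ grel (vopp u) g';
  grel_closed : forall (u : nat -> gVt) (g : nat -> gWt) u0 g0,
    (forall n, ns_mem gV (u n)) -> (forall n, ns_mem gW (g n)) ->
    (forall n, grel (u n) (g n)) ->
    ns_mem gV u0 -> ns_mem gW g0 ->
    ns_converges gV u u0 -> ns_converges gW g g0 -> grel u0 g0
}.

Section Ordered.
Context (G : GradientSpace) (le : gVt G -> gVt G -> Prop).

Local Notation Vm := (ns_mem (gV G)).
Local Notation nrm := (ns_norm (gV G)).

Definition is_linear_preorder : Prop :=
  (forall a, le a a) /\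
  (forall a b c, le a b -> le b c -> le a c) /\
  (forall a b c, le b c -> le (vadd a b) (vadd a c)) /\
  (forall a b alpha, le a b -> 0 <= alpha -> le (vscal alpha a) (vscal alpha b)).

Definition is_preordered_gs : Prop :=
  is_linear_preorder /\
  forall (u : nat -> gVt G) (psi u0 : gVt G),
    (forall n, Vm (u n)) -> (forall n, le (u n) psi) ->
    Vm u0 -> ns_converges (gV G) u u0 -> le u0 psi.

Definition is_ordered_gs : Prop :=
  is_preordered_gs /\ is_strictly_convex (gV G) /\
  forall u v, Vm u -> Vm v -> le vzero u -> le u v -> nrm u <= nrm v.

Definition Vplus (v : gVt G) : Prop := Vm v /\ le vzero v.

Definition Omega (psi1 psi2 u : gVt G) : Prop := Vm u /\ le psi1 u /\ le psi2 u.

Definition Omega' (psi1 psi2 v : gVt G) : Prop :=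
  Vm v /\ le vzero v /\ le v psi1 /\ le v psi2.

Definition is_max (psi1 psi2 u : gVt G) : Prop :=
  Omega psi1 psi2 u /\ (forall w, Omega psi1 psi2 w -> nrm u <= nrm w) /\
  (forall w, Omega psi1 psi2 w -> (forall w', Omega psi1 psi2 w' -> nrm w <= nrm w') ->
     w = u).

Definition minimizes_dist (psi1 psi2 m v : gVt G) : Prop :=
  Omega' psi1 psi2 v /\
  forall w, Omega' psi1 psi2 w -> nrm (vsub m v) <= nrm (vsub m w).

Definition is_min (psi1 psi2 v : gVt G) : Prop :=
  exists m, is_max psi1 psi2 m /\ minimizes_dist psi1 psi2 m v /\
    (forall w, minimizes_dist psi1 psi2 m w -> w = v).

Definition is_Vplus_lub (psi1 psi2 v : gVt G) : Prop :=
  Vplus v /\ le psi1 v /\ le psi2 v /\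
  forall u, Vplus u -> le psi1 u -> le psi2 u -> le v u.

Definition is_Vplus_glb (psi1 psi2 v : gVt G) : Prop :=
  Vplus v /\ le v psi1 /\ le v psi2 /\
  forall u, Vplus u -> le u psi1 -> le u psi2 -> le u v.

Definition Vplus_lattice : Prop :=
  forall u1 u2, Vplus u1 -> Vplus u2 ->
    (exists v, is_Vplus_lub u1 u2 v) /\ (exists v, is_Vplus_glb u1 u2 v).

End Ordered.

(* A V+-least upper bound of u1, u2 lies in Omega(u1, u2) and, the norm being
   monotone on V+, has the least norm there; by uniqueness of the minimizer it is
   max(u1, u2).  Dually a V+-greatest lower bound g minimizes ||max - v|| over
   Omega'(u1, u2), so it is min(u1, u2).  The reflection x |-> u1 + u2 - x
   exchanges upper and lower bounds, which links lubs and glbs.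

   The converse implications need max and min to exist: they are nearest points
   of nonempty closed convex sets.  For a minimizing sequence, Hahn-Banach applied
   to the sublinear functional f |-> limsup f(x_n) on V* gives an element of V**,
   which reflexivity represents by some v in V.  A separating functional would
   contradict the limsup bound, so v lies in every closed convex set that
   eventually contains the sequence: in the set itself and in every ball of radius
   above the infimum of the norm.  Strict convexity gives uniqueness. *)

From Stdlib Require Import Reals Lra Lia ZArith List.
From Stdlib Require Import Classical ClassicalEpsilon FunctionalExtensionality.
From mathcomp Require classical_sets.
Open Scope R_scope.

Arguments vadd_assoc {_}. Arguments vadd_comm {_}. Arguments vadd_0 {_}.
Arguments vadd_opp {_}. Arguments vscal_assoc {_}. Arguments vscal_1 {_}.
Arguments vscal_distr_l {_}. Arguments vscal_distr_r {_}.
Arguments ns_mem_0 {_}. Arguments ns_mem_add {_}. Arguments ns_mem_scal {_}.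
Arguments ns_norm_nonneg {_}. Arguments ns_norm_eq0 {_}. Arguments ns_norm_scal {_}.
Arguments ns_norm_triangle {_}.

Section VectorSpaceAlgebra.
Context {X : RVectorSpace}.
Implicit Types x y z : X.

Lemma vadd_0_l x : vadd vzero x = x.
Proof. rewrite vadd_comm; apply vadd_0. Qed.

Lemma vadd_cancel_l x y z : vadd x y = vadd x z -> y = z.
Proof.
intros H. rewrite <- (vadd_0_l y), <- (vadd_0_l z), <- (vadd_opp x),
  (vadd_comm x (vopp x)), <- !vadd_assoc, H. reflexivity.
Qed.

Lemma vscal_0_l x : vscal 0 x = vzero.
Proof.
apply (vadd_cancel_l (vscal 0 x)). rewrite <- vscal_distr_r, vadd_0. f_equal; ring.
Qed.

Lemma vscal_0_r a : vscal a (@vzero X) = vzero.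
Proof. rewrite <- (vscal_0_l vzero), vscal_assoc. f_equal; ring. Qed.

Lemma vopp_vscal x : vopp x = vscal (-1) x.
Proof.
apply (vadd_cancel_l x). rewrite vadd_opp. rewrite <- (vscal_1 x) at 1.
rewrite <- vscal_distr_r. replace (1 + -1) with 0 by ring. symmetry; apply vscal_0_l.
Qed.
End VectorSpaceAlgebra.

(* [vring] quotes both sides of an equation in [RVectorSpace] into [vexp] and
   compares the coefficients of each atom as real field identities (nonzero
   denominators are discharged by [lra]). *)
Inductive vexp :=
  | EVar (n : nat) | EZero | EAdd (a b : vexp) | EOpp (a : vexp)
  | EScal (r : R) (a : vexp) | ESub (a b : vexp).

Fixpoint vden {X : RVectorSpace} (l : list X) (e : vexp) : X :=
  match e with
  | EVar n => nth n l vzero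
  | EZero => vzero
  | EAdd a b => vadd (vden l a) (vden l b)
  | EOpp a => vopp (vden l a)
  | EScal r a => vscal r (vden l a)
  | ESub a b => vsub (vden l a) (vden l b)
  end.

Fixpoint vcoef (e : vexp) (i : nat) : R :=
  match e with
  | EVar n => if Nat.eqb i n then 1 else 0
  | EZero => 0
  | EAdd a b => vcoef a i + vcoef b i
  | EOpp a => - vcoef a i
  | EScal r a => r * vcoef a i
  | ESub a b => vcoef a i - vcoef b i
  end.

Fixpoint lincomb {X : RVectorSpace} (l : list X) (c : nat -> R) : X :=
  match l with
  | nil => vzero
  | x :: l' => vadd (vscal (c O) x) (lincomb l' (fun i => c (S i)))
  end.

Section LinearCombinations.
Context {X : RVectorSpace}.

Lemma lincomb_ext (l : list X) c1 c2 :
  (forall i, (i < length l)%nat -> c1 i = c2 i) -> lincomb l c1 = lincomb l c2.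
Proof.
revert c1 c2; induction l as [|x l IH]; intros c1 c2 H; simpl; auto.
rewrite (H O) by (simpl; lia). f_equal. apply IH. intros i Hi; apply H; simpl; lia.
Qed.

Lemma lincomb_add (l : list X) c1 c2 :
  lincomb l (fun i => c1 i + c2 i) = vadd (lincomb l c1) (lincomb l c2).
Proof.
revert c1 c2; induction l as [|x l IH]; intros c1 c2; simpl.
- symmetry; apply vadd_0.
- rewrite IH, vscal_distr_r, <- !vadd_assoc. f_equal.
  rewrite !vadd_assoc. f_equal. apply vadd_comm.
Qed.

Lemma lincomb_scal (l : list X) r c :
  lincomb l (fun i => r * c i) = vscal r (lincomb l c).
Proof.
revert c; induction l as [|x l IH]; intros c; simpl.
- symmetry; apply vscal_0_r.
- rewrite IH, vscal_distr_l, vscal_assoc. reflexivity.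
Qed.

Lemma lincomb_0 (l : list X) : lincomb l (fun _ => 0) = vzero.
Proof. induction l as [|x l IH]; simpl; auto. rewrite IH, vscal_0_l. apply vadd_0. Qed.

Lemma lincomb_unit (l : list X) n :
  lincomb l (fun i => if Nat.eqb i n then 1 else 0) = nth n l vzero.
Proof.
revert n; induction l as [|x l IH]; intros [|n]; simpl; auto.
- rewrite vscal_1, lincomb_0. apply vadd_0.
- rewrite vscal_0_l, vadd_0_l. apply IH.
Qed.

Lemma vden_lincomb (l : list X) e : vden l e = lincomb l (vcoef e).
Proof.
induction e; simpl.
- symmetry; apply lincomb_unit.
- symmetry; apply lincomb_0.
- rewrite IHe1, IHe2, <- lincomb_add. reflexivity.
- rewrite IHe, vopp_vscal, <- lincomb_scal. apply lincomb_ext; intros; ring.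
- rewrite IHe, <- lincomb_scal. reflexivity.
- unfold vsub. rewrite IHe1, IHe2, vopp_vscal, <- lincomb_scal, <- lincomb_add.
  apply lincomb_ext; intros; ring.
Qed.

Lemma vden_eq (l : list X) e1 e2 :
  (forall i, (i < length l)%nat -> vcoef e1 i = vcoef e2 i) -> vden l e1 = vden l e2.
Proof. intros H; rewrite !vden_lincomb; apply lincomb_ext; exact H. Qed.
End LinearCombinations.

Ltac add_atom t l :=
  lazymatch l with
  | nil => constr:(cons t nil)
  | cons t _ => l
  | cons ?x ?l' => let l'' := add_atom t l' in constr:(cons x l'')
  end.

Ltac atoms t l :=
  lazymatch t with
  | vadd ?a ?b => let l1 := atoms a l in atoms b l1
  | vsub ?a ?b => let l1 := atoms a l in atoms b l1
  | vopp ?a => atoms a l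
  | vscal _ ?a => atoms a l
  | vzero => l
  | _ => add_atom t l
  end.

Ltac find_atom t l :=
  lazymatch l with
  | cons t _ => constr:(O)
  | cons _ ?l' => let n := find_atom t l' in constr:(S n)
  end.

Ltac quote t l :=
  lazymatch t with
  | vadd ?a ?b => let qa := quote a l in let qb := quote b l in constr:(EAdd qa qb)
  | vsub ?a ?b => let qa := quote a l in let qb := quote b l in constr:(ESub qa qb)
  | vopp ?a => let qa := quote a l in constr:(EOpp qa)
  | vscal ?r ?a => let qa := quote a l in constr:(EScal r qa)
  | vzero => constr:(EZero)
  | _ => let n := find_atom t l in constr:(EVar n)
  end.

Ltac coef_cases :=
  match goal with
  | H : (?i < O)%nat |- _ => exfalso; lia
  | H : (?i < S ?n)%nat |- _ =>
    destruct i as [|i];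
    [simpl; first [ring | field; repeat split; intro; lra]
    | let H' := fresh in assert (H' : (i < n)%nat) by lia; clear H; coef_cases]
  end.

Ltac vring :=
  lazymatch goal with
  | |- @eq ?T ?a ?b =>
    let l0 := atoms a (@nil T) in
    let l := atoms b l0 in
    let qa := quote a l in
    let qb := quote b l in
    change (vden l qa = vden l qb);
    apply vden_eq; simpl length; intros i Hi; coef_cases
  end.

Definition Rsup (E : R -> Prop) : R :=
  match excluded_middle_informative (bound E /\ exists x, E x) with
  | left H => proj1_sig (completeness E (proj1 H) (proj2 H))
  | right _ => 0
  end.

Lemma Rsup_ub E x : (exists M, forall y, E y -> y <= M) -> E x -> x <= Rsup E.
Proof.
intros [M HM] Hx. unfold Rsup. destruct excluded_middle_informative as [H|H].
- destruct (completeness E _ _) as [m [Hub Hlub]]. apply Hub, Hx.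
- exfalso; apply H; split; [exists M; exact HM | exists x; exact Hx].
Qed.

Lemma Rsup_le E M : (exists x, E x) -> (forall y, E y -> y <= M) -> Rsup E <= M.
Proof.
intros [x Hx] HM. unfold Rsup. destruct excluded_middle_informative as [H|H].
- destruct (completeness E _ _) as [m [Hub Hlub]]. apply Hlub; exact HM.
- exfalso; apply H; split; [exists M; exact HM | exists x; exact Hx].
Qed.

Lemma Rsup_singleton E r : E r -> (forall y, E y -> y = r) -> Rsup E = r.
Proof.
intros Er Huniq. apply Rle_antisym.
- apply Rsup_le; [exists r; exact Er|]. intros y Ey; specialize (Huniq y Ey); lra.
- apply Rsup_ub; [|exact Er]. exists r; intros y Ey; specialize (Huniq y Ey); lra.
Qed.

Definition Rinf (E : R -> Prop) : R := - Rsup (fun y => E (- y)).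

Lemma Rinf_lb E x : (exists m, forall y, E y -> m <= y) -> E x -> Rinf E <= x.
Proof.
intros [m Hm] Hx. unfold Rinf.
enough (- x <= Rsup (fun y => E (- y))) by lra.
apply Rsup_ub.
- exists (- m). intros y Hy. apply Hm in Hy. lra.
- rewrite Ropp_involutive; exact Hx.
Qed.

Lemma Rinf_ge E m : (exists x, E x) -> (forall y, E y -> m <= y) -> m <= Rinf E.
Proof.
intros [x Hx] Hm. unfold Rinf.
enough (Rsup (fun y => E (- y)) <= - m) by lra.
apply Rsup_le.
- exists (- x). rewrite Ropp_involutive; exact Hx.
- intros y Hy. apply Hm in Hy. lra.
Qed.

Lemma Rinf_add_le (E1 E2 E3 : R -> Prop) :
  (exists m, forall r, E3 r -> m <= r) -> (exists r, E1 r) -> (exists r, E2 r) ->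
  (forall r1 r2, E1 r1 -> E2 r2 -> exists r, E3 r /\ r <= r1 + r2) ->
  Rinf E3 <= Rinf E1 + Rinf E2.
Proof.
intros lb3 ne1 ne2 H.
assert (H1 : forall r2, E2 r2 -> Rinf E3 - r2 <= Rinf E1).
{ intros r2 E2r2. apply Rinf_ge; [exact ne1|]. intros r1 E1r1.
  destruct (H r1 r2 E1r1 E2r2) as (r & E3r & Hr).
  pose proof (Rinf_lb E3 r lb3 E3r). lra. }
enough (Rinf E3 - Rinf E1 <= Rinf E2) by lra.
apply Rinf_ge; [exact ne2|]. intros r2 E2r2. pose proof (H1 r2 E2r2). lra.
Qed.

Lemma Rinf_scal_le (a : R) (E1 E2 : R -> Prop) : 0 < a ->
  (exists m, forall r, E2 r -> m <= r) -> (exists r, E1 r) ->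
  (forall r, E1 r -> exists r', E2 r' /\ r' <= a * r) ->
  Rinf E2 <= a * Rinf E1.
Proof.
intros Ha lb2 ne1 H.
enough (/ a * Rinf E2 <= Rinf E1) as Hle.
{ apply (Rmult_le_compat_l a) in Hle; [|lra].
  rewrite <- Rmult_assoc, Rinv_r, Rmult_1_l in Hle; lra. }
apply Rinf_ge; [exact ne1|]. intros r E1r. destruct (H r E1r) as (r' & E2r' & Hr').
pose proof (Rinf_lb E2 r' lb2 E2r').
apply (Rmult_le_reg_l a); [exact Ha|]. rewrite <- Rmult_assoc, Rinv_r, Rmult_1_l; lra.
Qed.

(** * Hahn-Banach extension *)

Section HahnBanach.
Context {X : RVectorSpace} (S : X -> Prop) (p : X -> R).
Hypothesis S_0 : S vzero.
Hypothesis S_add : forall x y, S x -> S y -> S (vadd x y).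
Hypothesis S_scal : forall a x, S x -> S (vscal a x).
Hypothesis p_subadd : forall x y, S x -> S y -> p (vadd x y) <= p x + p y.
Hypothesis p_poshom : forall a x, 0 < a -> S x -> p (vscal a x) <= a * p x.

Lemma p_poshom_ge a x : 0 < a -> S x -> a * p x <= p (vscal a x).
Proof.
intros Ha Hx.
assert (H := p_poshom (/ a) (vscal a x) (Rinv_0_lt_compat _ Ha) (S_scal a x Hx)).
rewrite vscal_assoc, Rinv_l, vscal_1 in H by lra.
apply (Rmult_le_compat_l a) in H; [|lra].
rewrite <- Rmult_assoc, Rinv_r, Rmult_1_l in H by lra. exact H.
Qed.

Lemma p_0_ge0 : 0 <= p vzero.
Proof. assert (H := p_subadd vzero vzero S_0 S_0). rewrite vadd_0 in H. lra. Qed.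

(* Partial linear functionals below [p] are handled through their graphs, so
   that Zorn's lemma applies to sets ordered by inclusion. *)
Record dominated_linear_graph (A : X * R -> Prop) : Prop := {
  dlg_dom : forall x r, A (x, r) -> S x /\ r <= p x;
  dlg_fun : forall x r s, A (x, r) -> A (x, s) -> r = s;
  dlg_add : forall x r y s, A (x, r) -> A (y, s) -> A (vadd x y, r + s);
  dlg_scal : forall a x r, A (x, r) -> A (vscal a x, a * r) }.

Lemma dlg_0 A x r : dominated_linear_graph A -> A (x, r) -> A (vzero, 0).
Proof.
intros HA Axr. assert (H := dlg_scal A HA 0 x r Axr).
rewrite vscal_0_l, Rmult_0_l in H. exact H.
Qed.

Lemma dlg_singleton0 : dominated_linear_graph (fun w => w = (vzero, 0)).
Proof.
split.
- intros x r [= -> ->]. split; [exact S_0 | apply p_0_ge0].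
- intros x r s [= _ ->] [= _ ->]. reflexivity.
- intros x r y s [= -> ->] [= -> ->]. f_equal; [apply vadd_0 | ring].
- intros a x r [= -> ->]. f_equal; [apply vscal_0_r | ring].
Qed.

Section ChainUnion.
Variable F : (X * R -> Prop) -> Prop.
Hypothesis F_dlg : forall A, F A -> dominated_linear_graph A.
Hypothesis F_chain : classical_sets.total_on F classical_sets.subset.

Let U := classical_sets.bigcup F (fun A => A).

Lemma bigcup_chain_common w1 w2 : U w1 -> U w2 -> exists A, F A /\ A w1 /\ A w2.
Proof.
intros [A1 F1 A1w] [A2 F2 A2w].
destruct (F_chain A1 A2 F1 F2) as [H|H]; [exists A2 | exists A1]; auto.
Qed.

Lemma dlg_bigcup_chain : dominated_linear_graph U.
Proof.
split.
- intros x r [A FA Axr]. exact (dlg_dom A (F_dlg A FA) x r Axr).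
- intros x r s H1 H2. destruct (bigcup_chain_common _ _ H1 H2) as [A [FA [Ar As]]].
  exact (dlg_fun A (F_dlg A FA) x r s Ar As).
- intros x r y s H1 H2. destruct (bigcup_chain_common _ _ H1 H2) as [A [FA [Ar As]]].
  exists A; [exact FA | exact (dlg_add A (F_dlg A FA) x r y s Ar As)].
- intros a x r [A FA Axr]. exists A; [exact FA | exact (dlg_scal A (F_dlg A FA) a x r Axr)].
Qed.
End ChainUnion.

Section OneStepExtension.
Variable A : X * R -> Prop.
Hypothesis A_dlg : dominated_linear_graph A.
Hypothesis A_0 : A (vzero, 0).
Variable x0 : X.
Hypothesis S_x0 : S x0.
Hypothesis x0_notin : forall r, ~ A (x0, r).

Lemma extension_gap y s z t : A (y, s) -> A (z, t) ->
  s - p (vsub y x0) <= p (vadd z x0) - t.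
Proof.
intros Ays Azt.
assert (Sy := proj1 (dlg_dom A A_dlg y s Ays)).
assert (Sz := proj1 (dlg_dom A A_dlg z t Azt)).
assert (Hyz := proj2 (dlg_dom A A_dlg _ _ (dlg_add A A_dlg y s z t Ays Azt))).
replace (vadd y z) with (vadd (vsub y x0) (vadd z x0)) in Hyz by vring.
assert (S (vsub y x0)) by (unfold vsub; rewrite vopp_vscal; auto).
pose proof (p_subadd _ _ H (S_add _ _ Sz S_x0)). lra.
Qed.

(* The value assigned to [x0]: any number between the two sides of the gap. *)
Definition ext_value := Rsup (fun r => exists y s, A (y, s) /\ r = s - p (vsub y x0)).

Lemma ext_value_ge y s : A (y, s) -> s - p (vsub y x0) <= ext_value.
Proof.
intros Ays. apply Rsup_ub; [|eauto].
exists (p (vadd vzero x0) - 0). intros r (y' & s' & Ay' & ->). apply extension_gap; auto.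
Qed.

Lemma ext_value_le z t : A (z, t) -> ext_value <= p (vadd z x0) - t.
Proof.
intros Azt. apply Rsup_le; [eauto|].
intros r (y & s & Ays & ->). apply extension_gap; auto.
Qed.

Definition ext_graph (w : X * R) : Prop :=
  exists y s t, A (y, s) /\ w = (vadd y (vscal t x0), s + t * ext_value).

Lemma ext_decomposition_unique y1 s1 t1 y2 s2 t2 : A (y1, s1) -> A (y2, s2) ->
  vadd y1 (vscal t1 x0) = vadd y2 (vscal t2 x0) -> y1 = y2 /\ t1 = t2.
Proof.
intros A1 A2 E. destruct (Req_dec t1 t2) as [<-|Ht].
- split; [|reflexivity].
  replace y1 with (vsub (vadd y1 (vscal t1 x0)) (vscal t1 x0)) by vring.
  rewrite E; vring.
- exfalso. apply (x0_notin (/ (t1 - t2) * (s2 + -1 * s1))).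
  replace x0 with (vscal (/ (t1 - t2)) (vadd y2 (vscal (-1) y1))).
  + apply dlg_scal, dlg_add, dlg_scal; auto.
  + transitivity (vscal (/ (t1 - t2)) (vscal (t1 - t2) x0)).
    * f_equal. apply (vadd_cancel_l y1).
      transitivity (vsub (vadd y2 (vscal t2 x0)) (vscal t2 x0)); [vring|].
      rewrite <- E; vring.
    * rewrite vscal_assoc, Rinv_l, vscal_1 by lra. reflexivity.
Qed.

Lemma ext_bound y s t : A (y, s) -> s + t * ext_value <= p (vadd y (vscal t x0)).
Proof.
intros Ays. assert (Sy := proj1 (dlg_dom A A_dlg y s Ays)).
destruct (Rtotal_order t 0) as [Hn|[->|Hp]].
- assert (H := ext_value_ge _ _ (dlg_scal A A_dlg (/ - t) y s Ays)).
  assert (Sm : S (vsub (vscal (/ - t) y) x0)) by (unfold vsub; rewrite vopp_vscal; auto).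
  assert (H2 := p_poshom_ge (- t) _ ltac:(lra) Sm).
  replace (vscal (- t) (vsub (vscal (/ - t) y) x0)) with (vadd y (vscal t x0)) in H2 by vring.
  apply (Rmult_le_compat_l (- t)) in H; [|lra].
  replace (- t * (/ - t * s - p (vsub (vscal (/ - t) y) x0)))
    with (s - (- t) * p (vsub (vscal (/ - t) y) x0)) in H by (field; lra).
  lra.
- rewrite vscal_0_l, vadd_0. pose proof (proj2 (dlg_dom A A_dlg y s Ays)). lra.
- assert (H := ext_value_le _ _ (dlg_scal A A_dlg (/ t) y s Ays)).
  assert (H2 := p_poshom_ge t _ Hp (S_add _ _ (S_scal (/ t) y Sy) S_x0)).
  replace (vscal t (vadd (vscal (/ t) y) x0)) with (vadd y (vscal t x0)) in H2 by vring.
  apply (Rmult_le_compat_l t) in H; [|lra].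
  replace (t * (p (vadd (vscal (/ t) y) x0) - / t * s))
    with (t * p (vadd (vscal (/ t) y) x0) - s) in H by (field; lra).
  lra.
Qed.

Lemma dlg_ext_graph : dominated_linear_graph ext_graph.
Proof.
split.
- intros x r (y & s & t & Ays & [= -> ->]). split.
  + apply S_add; [exact (proj1 (dlg_dom A A_dlg y s Ays)) | auto].
  + apply ext_bound, Ays.
- intros x r r' (y1 & s1 & t1 & A1 & [= -> ->]) (y2 & s2 & t2 & A2 & [= E ->]).
  destruct (ext_decomposition_unique _ _ _ _ _ _ A1 A2 E) as [<- <-].
  rewrite (dlg_fun A A_dlg y1 s1 s2 A1 A2). reflexivity.
- intros x r x' r' (y1 & s1 & t1 & A1 & [= -> ->]) (y2 & s2 & t2 & A2 & [= -> ->]).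
  exists (vadd y1 y2), (s1 + s2), (t1 + t2). split; [apply dlg_add; auto|].
  f_equal; [vring | ring].
- intros a x r (y & s & t & Ays & [= -> ->]).
  exists (vscal a y), (a * s), (a * t). split; [apply dlg_scal; auto|].
  f_equal; [vring | ring].
Qed.

Lemma ext_graph_proper : classical_sets.proper A ext_graph.
Proof.
split.
- intros [x r] Axr. exists x, r, 0. split; [exact Axr|].
  rewrite vscal_0_l, vadd_0, Rmult_0_l, Rplus_0_r. reflexivity.
- intros Hsub. apply (x0_notin ext_value), Hsub.
  exists vzero, 0, 1. split; [exact A_0|]. f_equal; [vring | ring].
Qed.
End OneStepExtension.

Theorem hahn_banach : exists f : X -> R,
  (forall x y, S x -> S y -> f (vadd x y) = f x + f y) /\
  (forall a x, S x -> f (vscal a x) = a * f x) /\ (forall x, S x -> f x <= p x).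
Proof.
destruct (@classical_sets.Zorn_bigcup _ dominated_linear_graph dlg_bigcup_chain)
  as (A & HA & Amax).
assert (A_0 : A (vzero, 0)).
{ apply NNPP; intros nA0. apply (Amax (fun w => w = (vzero, 0))); [split|exact dlg_singleton0].
  - intros [x r] Axr. exfalso. exact (nA0 (dlg_0 A x r HA Axr)).
  - intros Hsub. exact (nA0 (Hsub _ eq_refl)). }
assert (A_total : forall x, S x -> exists r, A (x, r)).
{ intros x Sx. apply NNPP; intros nAx.
  apply (Amax (ext_graph A x)).
  - apply ext_graph_proper; auto. intros r Axr. eauto.
  - apply dlg_ext_graph; auto. intros r Axr. eauto. }
assert (A_value : forall x r, A (x, r) -> Rsup (fun s => A (x, s)) = r).
{ intros x r Axr. apply Rsup_singleton; [exact Axr|].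
  intros s Axs. exact (dlg_fun A HA x s r Axs Axr). }
exists (fun x => Rsup (fun s => A (x, s))). repeat split.
- intros x y Sx Sy. destruct (A_total x Sx) as [r Ar], (A_total y Sy) as [s As].
  rewrite (A_value _ _ Ar), (A_value _ _ As). apply A_value, dlg_add; auto.
- intros a x Sx. destruct (A_total x Sx) as [r Ar].
  rewrite (A_value _ _ Ar). apply A_value, dlg_scal; auto.
- intros x Sx. destruct (A_total x Sx) as [r Ar].
  rewrite (A_value _ _ Ar). exact (proj2 (dlg_dom A HA x r Ar)).
Qed.
End HahnBanach.

(** * Separation of a point from a closed convex set *)

Definition convex {X : RVectorSpace} (C : X -> Prop) : Prop :=
  forall x y l, C x -> C y -> 0 <= l <= 1 -> C (vadd (vscal l x) (vscal (1 - l) y)).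

Lemma convex_and {X : RVectorSpace} (P Q : X -> Prop) :
  convex P -> convex Q -> convex (fun u => P u /\ Q u).
Proof. intros HP HQ x y l [P1 Q1] [P2 Q2] Hl. split; [apply HP|apply HQ]; auto. Qed.

Lemma INR_S_inv_pos (n : nat) : 0 < / (INR n + 1).
Proof. apply Rinv_0_lt_compat; pose proof (pos_INR n); lra. Qed.

Lemma INR_S_inv_antimono (n N : nat) : (N <= n)%nat -> / (INR n + 1) <= / (INR N + 1).
Proof.
intros H. apply Rinv_le_contravar; [pose proof (pos_INR N); lra|].
apply le_INR in H; lra.
Qed.

Lemma INR_S_inv_small (e : R) : 0 < e -> exists N : nat, / (INR N + 1) < e.
Proof.
intros He. assert (0 < / e) by (apply Rinv_0_lt_compat; lra).
destruct (archimed (/ e)) as [Hup _].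
assert (Hz : (0 <= up (/ e))%Z) by (apply le_IZR; lra).
exists (Z.to_nat (up (/ e))).
rewrite INR_IZR_INZ, Z2Nat.id by exact Hz.
replace e with (/ / e) at 2 by (field; lra).
apply Rinv_lt_contravar; nra.
Qed.

Section NormedSubspaceFacts.
Context {X : RVectorSpace} (V : NormedSubspace X).
Local Notation Vm := (ns_mem V).
Local Notation nrm := (ns_norm V).

Lemma ns_norm_0 : nrm vzero = 0.
Proof.
rewrite <- (vscal_0_l (@vzero X)), ns_norm_scal by apply ns_mem_0.
rewrite Rabs_R0; ring.
Qed.

Lemma ns_mem_opp x : Vm x -> Vm (vopp x).
Proof. intros; rewrite vopp_vscal; apply ns_mem_scal; auto. Qed.

Lemma ns_mem_sub x y : Vm x -> Vm y -> Vm (vsub x y).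
Proof. intros; unfold vsub; apply ns_mem_add; auto; apply ns_mem_opp; auto. Qed.

Lemma ns_norm_opp x : Vm x -> nrm (vopp x) = nrm x.
Proof. intros; rewrite vopp_vscal, ns_norm_scal by auto. rewrite Rabs_left by lra; ring. Qed.

Lemma ns_norm_sub_sym x y : Vm x -> Vm y -> nrm (vsub x y) = nrm (vsub y x).
Proof.
intros. replace (vsub x y) with (vopp (vsub y x)) by vring.
apply ns_norm_opp, ns_mem_sub; auto.
Qed.

Lemma ns_norm_le_sub x y : Vm x -> Vm y -> nrm x <= nrm (vsub x y) + nrm y.
Proof.
intros. replace x with (vadd (vsub x y) y) at 1 by vring.
apply ns_norm_triangle; auto. apply ns_mem_sub; auto.
Qed.

Lemma ns_norm_scal_pos a x : 0 <= a -> Vm x -> nrm (vscal a x) = a * nrm x.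
Proof. intros; rewrite ns_norm_scal, Rabs_pos_eq; auto. Qed.

Definition closed_in (C : X -> Prop) : Prop :=
  forall (u : nat -> X) u0, (forall n, C (u n)) -> Vm u0 -> ns_converges V u u0 -> C u0.

Lemma closed_in_and (P Q : X -> Prop) :
  closed_in P -> closed_in Q -> closed_in (fun u => P u /\ Q u).
Proof.
intros HP HQ u u0 Hu Vu0 Hc.
split; [apply (HP u u0) | apply (HQ u u0)]; auto; intros n; apply (Hu n).
Qed.

Lemma ns_converges_ext u l u' l' :
  (forall n, nrm (vsub (u' n) l') = nrm (vsub (u n) l)) ->
  ns_converges V u l -> ns_converges V u' l'.
Proof.
intros H Hc e He. destruct (Hc e He) as [N HN]. exists N. intros n Hn. rewrite H. auto.
Qed.

Lemma ns_converges_of_bound (u : nat -> X) l :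
  (forall n, Vm (vsub (u n) l)) -> (forall n, nrm (vsub (u n) l) <= / (INR n + 1)) ->
  ns_converges V u l.
Proof.
intros Hm H e He. destruct (INR_S_inv_small e He) as [N HN]. exists N.
intros n Hn. unfold R_dist. rewrite Rminus_0_r, Rabs_pos_eq by (apply ns_norm_nonneg; auto).
eapply Rle_lt_trans; [apply H|]. eapply Rle_lt_trans; [apply INR_S_inv_antimono|]; eauto.
Qed.

Lemma closed_in_ball r : closed_in (fun w => Vm w /\ nrm w <= r).
Proof.
intros u u0 Hu Vu0 Hcv. split; [exact Vu0|]. apply Rnot_lt_le. intros Hl.
destruct (Hcv (nrm u0 - r)) as [N HN]; [lra|].
specialize (HN N (le_n _)). unfold R_dist in HN. rewrite Rminus_0_r in HN.
destruct (Hu N) as [VuN HuN].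
pose proof (ns_norm_le_sub u0 (u N) Vu0 VuN).
rewrite (ns_norm_sub_sym u0 (u N)) in H by auto.
pose proof (Rle_abs (nrm (vsub (u N) u0))). lra.
Qed.

Lemma convex_ball r : convex (fun w => Vm w /\ nrm w <= r).
Proof.
intros x y l [Vx Hx] [Vy Hy] Hl. split.
- apply ns_mem_add; apply ns_mem_scal; auto.
- eapply Rle_trans; [apply ns_norm_triangle; apply ns_mem_scal; auto|].
  rewrite !ns_norm_scal_pos by (auto; lra). nra.
Qed.

Section Separation.
Variable C : X -> Prop.
Hypothesis C_sub : forall c, C c -> Vm c.
Hypothesis C_convex : convex C.
Hypothesis C_closed : closed_in C.
Variable c0 : X.
Hypothesis C_c0 : C c0.
Variable v : X.
Hypothesis V_v : Vm v.
Hypothesis v_notin : ~ C v.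

Lemma dist_closed_pos : exists d, 0 < d /\ forall c, C c -> d <= nrm (vsub v c).
Proof.
apply NNPP. intros Hn.
assert (H : forall n : nat, exists c, C c /\ nrm (vsub v c) <= / (INR n + 1)).
{ intros n. apply NNPP. intros Hc. apply Hn. exists (/ (INR n + 1)).
  split; [apply INR_S_inv_pos|].
  intros c Cc. apply Rnot_lt_le. intros Hl. apply Hc. exists c; split; auto; lra. }
apply choice in H as [u Hu].
apply v_notin, (C_closed u v); [apply Hu | exact V_v|].
apply ns_converges_of_bound.
- intros n. apply ns_mem_sub; auto. apply C_sub, Hu.
- intros n. rewrite ns_norm_sub_sym by (auto; apply C_sub, Hu). apply Hu.
Qed.

Variable d : R.
Hypothesis d_pos : 0 < d.
Hypothesis d_le : forall c, C c -> d <= nrm (vsub v c).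

(* A sublinear functional below the norm that is [<= -d] at every [c - v]:
   the infimum of [||x + t (v - c)|| - t d] over [t >= 0] and [c] in [C]. *)
Definition sep_values (x : X) (r : R) : Prop :=
  exists t c, 0 <= t /\ C c /\ r = nrm (vadd x (vscal t (vsub v c))) - t * d.

Definition sep_gauge (x : X) : R := Rinf (sep_values x).

Lemma sep_values_norm x : sep_values x (nrm x).
Proof. exists 0, c0. repeat split; auto; [lra|]. rewrite vscal_0_l, vadd_0; ring. Qed.

Lemma sep_values_lb x : Vm x -> exists m, forall r, sep_values x r -> m <= r.
Proof.
intros Vx. exists (- nrm x). intros r (t & c & Ht & Cc & ->).
assert (Vd : Vm (vsub v c)) by (apply ns_mem_sub; auto).
assert (H1 := ns_norm_le_sub (vscal t (vsub v c)) (vopp x)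
  (ns_mem_scal V _ _ Vd) (ns_mem_opp x Vx)).
replace (vsub (vscal t (vsub v c)) (vopp x)) with (vadd x (vscal t (vsub v c))) in H1 by vring.
rewrite ns_norm_scal_pos, ns_norm_opp in H1 by auto.
pose proof (d_le c Cc). nra.
Qed.

Lemma sep_gauge_le x r : Vm x -> sep_values x r -> sep_gauge x <= r.
Proof. intros Vx. apply Rinf_lb, sep_values_lb, Vx. Qed.

Lemma sep_gauge_subadd x y : Vm x -> Vm y ->
  sep_gauge (vadd x y) <= sep_gauge x + sep_gauge y.
Proof.
intros Vx Vy. apply Rinf_add_le;
  [apply sep_values_lb, ns_mem_add; auto | eexists; apply sep_values_norm ..|].
intros r1 r2 (t1 & c1 & Ht1 & C1 & ->) (t2 & c2 & Ht2 & C2 & ->).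
assert (Vw : forall t c z, C c -> Vm z -> Vm (vadd z (vscal t (vsub v c)))).
{ intros t c z Cc Vz. apply ns_mem_add, ns_mem_scal, ns_mem_sub; auto. }
pose proof (ns_norm_triangle V _ _ (Vw t1 c1 x C1 Vx) (Vw t2 c2 y C2 Vy)).
destruct (Req_dec (t1 + t2) 0) as [Hz|Hz].
- assert (t1 = 0) as -> by lra. assert (t2 = 0) as -> by lra.
  exists (nrm (vadd x y)). split; [apply sep_values_norm|].
  rewrite !vscal_0_l, !vadd_0 in *. lra.
- set (l := t1 / (t1 + t2)).
  assert (Hl : 0 <= l <= 1).
  { assert (0 < t1 + t2) by lra. unfold l, Rdiv.
    split; [apply Rmult_le_pos; [lra | left; apply Rinv_0_lt_compat; lra]|].
    apply (Rmult_le_reg_r (t1 + t2)); [lra|]. rewrite Rmult_assoc, Rinv_l; lra. }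
  exists (nrm (vadd (vadd x y) (vscal (t1 + t2) (vsub v (vadd (vscal l c1) (vscal (1 - l) c2)))))
          - (t1 + t2) * d).
  split; [exists (t1 + t2), (vadd (vscal l c1) (vscal (1 - l) c2)); repeat split; auto; lra|].
  replace (vadd (vadd x y) (vscal (t1 + t2) (vsub v (vadd (vscal l c1) (vscal (1 - l) c2)))))
    with (vadd (vadd x (vscal t1 (vsub v c1))) (vadd y (vscal t2 (vsub v c2))))
    by (unfold l; vring).
  lra.
Qed.

Lemma sep_gauge_poshom a x : 0 < a -> Vm x -> sep_gauge (vscal a x) <= a * sep_gauge x.
Proof.
intros Ha Vx. apply Rinf_scal_le;
  [exact Ha | apply sep_values_lb, ns_mem_scal, Vx | eexists; apply sep_values_norm |].
intros r (t & c & Ht & Cc & ->). exists (a * (nrm (vadd x (vscal t (vsub v c))) - t * d)).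
split; [|lra]. exists (a * t), c. repeat split; auto; [nra|].
replace (vadd (vscal a x) (vscal (a * t) (vsub v c)))
  with (vscal a (vadd x (vscal t (vsub v c)))) by vring.
rewrite ns_norm_scal_pos; [ring | lra |].
apply ns_mem_add, ns_mem_scal, ns_mem_sub; auto.
Qed.
End Separation.

Theorem separation (C : X -> Prop) (c0 v : X) :
  (forall c, C c -> Vm c) -> convex C -> closed_in C -> C c0 -> Vm v -> ~ C v ->
  exists f, is_dual_elem V f /\ exists d, 0 < d /\ forall c, C c -> f c + d <= f v.
Proof.
intros C_sub C_convex C_closed C_c0 V_v v_notin.
destruct (dist_closed_pos C C_sub C_closed v V_v v_notin) as (d & Hd & Hdist).
set (q := sep_gauge C v d).
assert (q_norm : forall x, Vm x -> q x <= nrm x)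
  by (intros x Vx; apply sep_gauge_le; auto; eapply sep_values_norm; eauto).
destruct (hahn_banach Vm q (ns_mem_0 V) (ns_mem_add V) (ns_mem_scal V))
  as (f & f_add & f_scal & f_le).
- intros; apply sep_gauge_subadd with c0; auto.
- intros; apply sep_gauge_poshom with c0; auto.
- exists f. split; [split; [exact f_add | split; [exact f_scal|]]|].
  + exists 1. intros x Vx. rewrite Rmult_1_l. apply Rabs_le. split.
    * assert (H := f_le _ (ns_mem_opp x Vx)). rewrite vopp_vscal, f_scal in H by auto.
      pose proof (q_norm _ (ns_mem_opp x Vx)). rewrite ns_norm_opp, vopp_vscal in H0 by auto.
      lra.
    * eapply Rle_trans; [apply f_le | apply q_norm]; auto.
  + exists d; split; [exact Hd|]. intros c Cc.
    assert (Vc := C_sub c Cc).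
    assert (Hq : q (vsub c v) <= - d).
    { apply Rle_trans with (nrm (vadd (vsub c v) (vscal 1 (vsub v c))) - 1 * d).
      - eapply sep_gauge_le; eauto; [apply ns_mem_sub; auto|].
        exists 1, c. repeat split; auto. lra.
      - replace (vadd (vsub c v) (vscal 1 (vsub v c))) with (@vzero X) by vring.
        rewrite ns_norm_0; lra. }
    assert (f (vsub c v) = f c - f v).
    { unfold vsub. rewrite f_add by (auto; apply ns_mem_opp; auto). rewrite vopp_vscal, f_scal by auto. ring. }
    pose proof (f_le _ (ns_mem_sub c v Vc V_v)). lra.
Qed.
End NormedSubspaceFacts.

(** * Norm minimizers in reflexive spaces *)

(* The dual of [V] sits inside this space, where Hahn-Banach is applied to the
   [limsup] functional. *)
Definition fun_space (X : Type) : RVectorSpace.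
Proof.
refine (@Build_RVectorSpace (X -> R) (fun f g x => f x + g x) (fun _ => 0)
  (fun f x => - f x) (fun a f x => a * f x) _ _ _ _ _ _ _ _);
  intros; apply functional_extensionality; intros; ring.
Defined.

Lemma Rabs_le_between x M : Rabs x <= M -> - M <= x <= M.
Proof. unfold Rabs; destruct Rcase_abs; intros; lra. Qed.

Section Dual.
Context {X : RVectorSpace} (V : NormedSubspace X).
Local Notation Vm := (ns_mem V).
Local Notation nrm := (ns_norm V).

Lemma is_dual_elem_0 : is_dual_elem V (fun _ => 0).
Proof.
split; [intros; ring|split; [intros; ring|]]. exists 0. intros. rewrite Rabs_R0; lra.
Qed.

Lemma is_dual_elem_add f g :
  is_dual_elem V f -> is_dual_elem V g -> is_dual_elem V (fun x => f x + g x).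
Proof.
intros (f_add & f_scal & M1 & H1) (g_add & g_scal & M2 & H2). split; [|split].
- intros x y Hx Hy. rewrite f_add, g_add by auto. ring.
- intros a x Hx. rewrite f_scal, g_scal by auto. ring.
- exists (M1 + M2). intros x Hx. eapply Rle_trans; [apply Rabs_triang|].
  pose proof (H1 x Hx); pose proof (H2 x Hx). lra.
Qed.

Lemma is_dual_elem_scal a f : is_dual_elem V f -> is_dual_elem V (fun x => a * f x).
Proof.
intros (f_add & f_scal & M & H). split; [|split].
- intros x y Hx Hy. rewrite f_add by auto. ring.
- intros b x Hx. rewrite f_scal by auto. ring.
- exists (Rabs a * M). intros x Hx. rewrite Rabs_mult, Rmult_assoc.
  apply Rmult_le_compat_l; [apply Rabs_pos|auto].
Qed.

Section WeakClusterPoint.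
Variable xs : nat -> X.
Variable B : R.
Hypothesis xs_mem : forall n, Vm (xs n).
Hypothesis xs_bound : forall n, nrm (xs n) <= B.

Definition limsup_values (f : X -> R) (r : R) : Prop :=
  exists N, forall n, (N <= n)%nat -> f (xs n) <= r.

Definition limsup_dual (f : X -> R) : R := Rinf (limsup_values f).

Lemma dual_bounded_on_seq f : is_dual_elem V f -> exists M, forall n, Rabs (f (xs n)) <= M.
Proof.
intros (_ & _ & M & HM). exists (Rabs M * B). intros n.
eapply Rle_trans; [apply HM, xs_mem|].
pose proof (xs_bound n). pose proof (ns_norm_nonneg V _ (xs_mem n)).
pose proof (Rle_abs M). pose proof (Rabs_pos M). nra.
Qed.

Lemma limsup_values_lb f : is_dual_elem V f ->
  exists m, forall r, limsup_values f r -> m <= r.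
Proof.
intros Hf. destruct (dual_bounded_on_seq f Hf) as [M HM].
exists (- M). intros r [N HN]. pose proof (HN N (le_n _)).
pose proof (Rabs_le_between _ _ (HM N)) as [? _]. lra.
Qed.

Lemma limsup_values_ne f : is_dual_elem V f -> exists r, limsup_values f r.
Proof.
intros Hf. destruct (dual_bounded_on_seq f Hf) as [M HM].
exists M, O. intros n _. exact (proj2 (Rabs_le_between _ _ (HM n))).
Qed.

Lemma limsup_dual_le f r : is_dual_elem V f -> limsup_values f r -> limsup_dual f <= r.
Proof. intros Hf. apply Rinf_lb, limsup_values_lb, Hf. Qed.

Lemma limsup_dual_subadd f g : is_dual_elem V f -> is_dual_elem V g ->
  limsup_dual (fun x => f x + g x) <= limsup_dual f + limsup_dual g.
Proof.
intros Hf Hg. apply Rinf_add_le;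
  [apply limsup_values_lb, is_dual_elem_add; auto | apply limsup_values_ne; auto ..|].
intros r1 r2 [N1 H1] [N2 H2]. exists (r1 + r2). split; [|lra].
exists (max N1 N2). intros n Hn. pose proof (H1 n ltac:(lia)). pose proof (H2 n ltac:(lia)). lra.
Qed.

Lemma limsup_dual_poshom a f : 0 < a -> is_dual_elem V f ->
  limsup_dual (fun x => a * f x) <= a * limsup_dual f.
Proof.
intros Ha Hf. apply Rinf_scal_le;
  [exact Ha | apply limsup_values_lb, is_dual_elem_scal; auto | apply limsup_values_ne; auto|].
intros r [N H]. exists (a * r). split; [|lra].
exists N. intros n Hn. apply Rmult_le_compat_l; [lra|auto].
Qed.

Section DominatedBidual.
Variable Phi : (X -> R) -> R.
Hypothesis Phi_add : forall f g, is_dual_elem V f -> is_dual_elem V g ->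
  Phi (fun x => f x + g x) = Phi f + Phi g.
Hypothesis Phi_scal : forall a f, is_dual_elem V f -> Phi (fun x => a * f x) = a * Phi f.
Hypothesis Phi_le : forall f, is_dual_elem V f -> Phi f <= limsup_dual f.

Lemma Phi_le_of_seq f c : is_dual_elem V f -> (forall n, f (xs n) <= c) -> Phi f <= c.
Proof.
intros Hf H. eapply Rle_trans; [apply Phi_le, Hf|]. apply limsup_dual_le; [exact Hf|].
exists O; auto.
Qed.

Lemma Phi_sub f g : is_dual_elem V f -> is_dual_elem V g ->
  Phi (fun x => f x + -1 * g x) = Phi f - Phi g.
Proof. intros Hf Hg. rewrite Phi_add, Phi_scal by (auto; apply is_dual_elem_scal; auto). ring. Qed.

Lemma Phi_restriction f g : is_dual_elem V f -> is_dual_elem V g ->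
  (forall x, Vm x -> f x = g x) -> Phi f = Phi g.
Proof.
intros Hf Hg Hfg.
assert (Phi (fun x => f x + -1 * g x) <= 0).
{ apply Phi_le_of_seq; [apply is_dual_elem_add, is_dual_elem_scal; auto|].
  intros n. rewrite (Hfg _ (xs_mem n)). lra. }
assert (Phi (fun x => g x + -1 * f x) <= 0).
{ apply Phi_le_of_seq; [apply is_dual_elem_add, is_dual_elem_scal; auto|].
  intros n. rewrite (Hfg _ (xs_mem n)). lra. }
rewrite Phi_sub in * by auto. lra.
Qed.

Lemma Phi_bound f M : is_dual_elem V f -> 0 <= M ->
  (forall x, Vm x -> Rabs (f x) <= M * nrm x) -> Rabs (Phi f) <= B * M.
Proof.
intros Hf M0 HM.
assert (Hseq : forall g, is_dual_elem V g -> (forall x, Vm x -> Rabs (g x) <= M * nrm x) ->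
  Phi g <= B * M).
{ intros g Hg HgM. apply Phi_le_of_seq; [exact Hg|]. intros n.
  eapply Rle_trans; [apply Rle_abs|]. eapply Rle_trans; [apply HgM, xs_mem|].
  pose proof (xs_bound n). nra. }
assert (Hneg := Hseq _ (is_dual_elem_scal (-1) f Hf)).
rewrite Phi_scal in Hneg by exact Hf.
apply Rabs_le. split; [|apply Hseq; auto].
enough (-1 * Phi f <= B * M) by lra. apply Hneg.
intros x Vx. rewrite Rabs_mult. replace (Rabs (-1)) with 1 by (rewrite Rabs_left; lra). rewrite Rmult_1_l. auto.
Qed.

Lemma Phi_is_bidual_elem : is_bidual_elem V Phi.
Proof.
split; [exact Phi_restriction|split; [exact Phi_add|split; [exact Phi_scal|]]].
destruct (classic (exists x, Vm x /\ nrm x <> 0)) as [(x1 & Vx1 & Nx1)|Htriv].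
- exists B. intros f M Hf HM. apply Phi_bound; auto.
  pose proof (HM x1 Vx1). pose proof (Rabs_pos (f x1)).
  pose proof (ns_norm_nonneg V x1 Vx1). destruct (Rle_lt_dec 0 M); [auto | nra].
- (* [V = {0}]: every functional vanishes on [V], and [M] may be negative. *)
  exists 0. intros f M Hf _. rewrite Rmult_0_l.
  rewrite (Phi_restriction f (fun _ => 0) Hf (is_dual_elem_0)).
  + assert (H := Phi_scal 0 (fun _ => 0) is_dual_elem_0). rewrite Rmult_0_l in H.
    replace (fun _ : X => 0 * 0) with (fun _ : X => 0) in H
      by (apply functional_extensionality; intros; ring).
    rewrite H, Rabs_R0. lra.
  + intros x Vx. destruct Hf as (_ & f_scal & _).
    replace x with (@vzero X) by (symmetry; apply (ns_norm_eq0 V); auto;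
      apply NNPP; intros Hx; apply Htriv; eauto).
    rewrite <- (vscal_0_l (@vzero X)), f_scal by apply ns_mem_0. ring.
Qed.
End DominatedBidual.

Theorem weak_cluster_point : is_reflexive V ->
  exists v, Vm v /\ forall f, is_dual_elem V f -> f v <= limsup_dual f.
Proof.
intros V_refl.
destruct (hahn_banach (X := fun_space X) (is_dual_elem V) limsup_dual
  is_dual_elem_0 is_dual_elem_add is_dual_elem_scal limsup_dual_subadd limsup_dual_poshom)
  as (Phi & Phi_add & Phi_scal & Phi_le).
destruct (V_refl Phi (Phi_is_bidual_elem Phi Phi_add Phi_scal Phi_le)) as (v & Vv & Hv).
exists v. split; [exact Vv|]. intros f Hf. rewrite <- Hv by exact Hf. apply Phi_le, Hf.
Qed.

Lemma weak_cluster_point_mem (C : X -> Prop) v :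
  (forall c, C c -> Vm c) -> convex C -> closed_in V C ->
  (exists N, forall n, (N <= n)%nat -> C (xs n)) ->
  Vm v -> (forall f, is_dual_elem V f -> f v <= limsup_dual f) -> C v.
Proof.
intros C_sub C_convex C_closed [N HN] Vv Hv. apply NNPP. intros nCv.
destruct (separation V C (xs N) v C_sub C_convex C_closed (HN N (le_n _)) Vv nCv)
  as (f & Hf & d & Hd & Hsep).
assert (limsup_dual f <= f v - d).
{ apply limsup_dual_le; [exact Hf|]. exists N. intros n Hn.
  pose proof (Hsep _ (HN n Hn)). lra. }
pose proof (Hv f Hf). lra.
Qed.
End WeakClusterPoint.
End Dual.

Section NormMinimizer.
Context {X : RVectorSpace} (V : NormedSubspace X).
Local Notation Vm := (ns_mem V).
Local Notation nrm := (ns_norm V).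
Variable K : X -> Prop.
Hypothesis K_sub : forall c, K c -> Vm c.
Hypothesis K_convex : convex K.
Hypothesis K_closed : closed_in V K.

Theorem norm_minimizer_exists : is_reflexive V -> (exists k, K k) ->
  exists v, K v /\ forall w, K w -> nrm v <= nrm w.
Proof.
intros V_refl [k0 Kk0].
set (dK := Rinf (fun r => exists w, K w /\ r = nrm w)).
assert (dK_lb : exists m, forall r, (exists w, K w /\ r = nrm w) -> m <= r)
  by (exists 0; intros r (w & Kw & ->); apply ns_norm_nonneg; auto).
assert (dK_le : forall w, K w -> dK <= nrm w) by (intros w Kw; apply Rinf_lb; eauto).
assert (Hseq : forall n : nat, exists w, K w /\ nrm w <= dK + / (INR n + 1)).
{ intros n. apply NNPP. intros H.
  enough (dK + / (INR n + 1) <= dK) by (pose proof (INR_S_inv_pos n); lra).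
  apply Rinf_ge; [eauto|]. intros r (w & Kw & ->).
  apply Rnot_lt_le. intros Hl. apply H. exists w; split; auto; lra. }
apply choice in Hseq as [xs Hxs].
assert (xs_mem : forall n, Vm (xs n)) by (intros n; apply K_sub, Hxs).
assert (xs_bound : forall n, nrm (xs n) <= dK + 1).
{ intros n. pose proof (proj2 (Hxs n)). pose proof (INR_S_inv_antimono n 0 (Nat.le_0_l n)).
  simpl in *. lra. }
destruct (weak_cluster_point V xs _ xs_mem xs_bound V_refl) as (v & Vv & Hv).
exists v. split.
- apply (weak_cluster_point_mem V xs _ xs_mem xs_bound K v); auto.
  exists O. intros n _. apply Hxs.
- (* Every ball of radius above [dK] eventually contains the sequence. *)
  enough (nrm v <= dK) by (intros w Kw; pose proof (dK_le w Kw); lra).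
  apply Rnot_lt_le. intros Hlt. set (r := (dK + nrm v) / 2).
  assert (Hball : Vm v /\ nrm v <= r).
  { apply (weak_cluster_point_mem V xs _ xs_mem xs_bound (fun w => Vm w /\ nrm w <= r) v); auto.
    - intros c [Vc _]; exact Vc.
    - apply convex_ball.
    - apply closed_in_ball.
    - destruct (INR_S_inv_small (r - dK)) as [N HN]; [unfold r; lra|].
      exists N. intros n Hn. split; [apply xs_mem|].
      pose proof (proj2 (Hxs n)). pose proof (INR_S_inv_antimono n N Hn). lra. }
  unfold r in Hball. lra.
Qed.

Lemma norm_minimizer_unique u w : is_strictly_convex V ->
  K u -> K w -> (forall z, K z -> nrm u <= nrm z) -> (forall z, K z -> nrm w <= nrm z) ->
  u = w.
Proof.
intros V_sc Ku Kw Hu Hw.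
assert (Vu := K_sub u Ku). assert (Vw := K_sub w Kw).
assert (E : nrm u = nrm w) by (pose proof (Hu w Kw); pose proof (Hw u Ku); lra).
destruct (Req_dec (nrm u) 0) as [Z|NZ].
{ rewrite (ns_norm_eq0 V u Vu Z), (ns_norm_eq0 V w Vw) by lra. reflexivity. }
assert (Hm : 0 < nrm u) by (pose proof (ns_norm_nonneg V u Vu); lra).
apply NNPP. intros Hne. set (m := nrm u) in *.
assert (Hunit : forall z, Vm z -> nrm z = m -> nrm (vscal (/ m) z) = 1).
{ intros z Vz Hz. rewrite ns_norm_scal_pos, Hz by (auto; left; apply Rinv_0_lt_compat; auto).
  apply Rinv_l; lra. }
assert (Hne' : vscal (/ m) u <> vscal (/ m) w).
{ intros Heq. apply Hne. apply (f_equal (vscal m)) in Heq.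
  rewrite !vscal_assoc, Rinv_r, !vscal_1 in Heq by lra. exact Heq. }
assert (H := V_sc _ _ (ns_mem_scal V _ _ Vu) (ns_mem_scal V _ _ Vw)
  (Hunit u Vu eq_refl) (Hunit w Vw (eq_sym E)) Hne').
(* The midpoint is in [K] but strictly shorter than [m]. *)
assert (Hmid := Hu _ (K_convex u w (1/2) Ku Kw ltac:(lra))).
replace (vadd (vscal (1 / 2) u) (vscal (1 - 1 / 2) w))
  with (vscal m (vscal (1 / 2) (vadd (vscal (/ m) u) (vscal (/ m) w)))) in Hmid by vring.
rewrite ns_norm_scal_pos in Hmid; [nra | lra |].
apply ns_mem_scal, ns_mem_add; apply ns_mem_scal; auto.
Qed.
End NormMinimizer.

Section NearestPoint.
Context {X : RVectorSpace} (V : NormedSubspace X).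
Local Notation Vm := (ns_mem V).
Local Notation nrm := (ns_norm V).
Variable K : X -> Prop.
Hypothesis K_sub : forall c, K c -> Vm c.
Hypothesis K_convex : convex K.
Hypothesis K_closed : closed_in V K.
Variable m : X.
Hypothesis V_m : Vm m.

Let D (z : X) : Prop := exists c, K c /\ z = vsub m c.

Let D_sub z : D z -> Vm z.
Proof. intros (c & Kc & ->). apply ns_mem_sub; auto. Qed.

Let D_convex : convex D.
Proof.
intros x y l (c1 & K1 & ->) (c2 & K2 & ->) Hl.
exists (vadd (vscal l c1) (vscal (1 - l) c2)). split; [apply K_convex; auto | vring].
Qed.

Let D_closed : closed_in V D.
Proof.
intros u u0 Hu Vu0 Hc. exists (vsub m u0). split; [|vring].
apply (K_closed (fun n => vsub m (u n))).
- intros n. destruct (Hu n) as (c & Kc & E). rewrite E.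
  replace (vsub m (vsub m c)) with c by vring. exact Kc.
- apply ns_mem_sub; auto.
- apply (ns_converges_ext V u u0); auto. intros n.
  replace (vsub (vsub m (u n)) (vsub m u0)) with (vopp (vsub (u n) u0)) by vring.
  apply ns_norm_opp, ns_mem_sub; [apply D_sub, Hu | exact Vu0].
Qed.

Lemma nearest_point_exists : is_reflexive V -> (exists k, K k) ->
  exists v, K v /\ forall w, K w -> nrm (vsub m v) <= nrm (vsub m w).
Proof.
intros V_refl [k Kk].
destruct (norm_minimizer_exists V D D_sub D_convex D_closed V_refl) as (z & (v & Kv & ->) & Hz).
- exists (vsub m k), k. auto.
- exists v. split; [exact Kv|]. intros w Kw. apply Hz. exists w; auto.
Qed.

Lemma nearest_point_unique u w : is_strictly_convex V -> K u -> K w ->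
  (forall z, K z -> nrm (vsub m u) <= nrm (vsub m z)) ->
  (forall z, K z -> nrm (vsub m w) <= nrm (vsub m z)) -> u = w.
Proof.
intros V_sc Ku Kw Hu Hw.
assert (E : vsub m u = vsub m w).
{ apply (norm_minimizer_unique V D D_sub D_convex); auto; try (eexists; eauto; fail).
  - intros z (c & Kc & ->). auto.
  - intros z (c & Kc & ->). auto. }
replace u with (vsub m (vsub m u)) by vring. rewrite E. vring.
Qed.
End NearestPoint.

(** * Ordered gradient spaces *)

Section OrderedGradientSpace.
Variable G : GradientSpace.
Variable le : gVt G -> gVt G -> Prop.
Hypothesis Hord : is_ordered_gs G le.
Local Notation X := (gVt G).
Local Notation V := (gV G).
Local Notation Vm := (ns_mem (gV G)).
Local Notation nrm := (ns_norm (gV G)).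

Lemma gs_le_refl a : le a a.
Proof. exact (proj1 (proj1 (proj1 Hord)) a). Qed.

Lemma gs_le_trans a b c : le a b -> le b c -> le a c.
Proof. exact (proj1 (proj2 (proj1 (proj1 Hord))) a b c). Qed.

Lemma le_add_l a b c : le b c -> le (vadd a b) (vadd a c).
Proof. exact (proj1 (proj2 (proj2 (proj1 (proj1 Hord)))) a b c). Qed.

Lemma le_scal a b l : le a b -> 0 <= l -> le (vscal l a) (vscal l b).
Proof. exact (proj2 (proj2 (proj2 (proj1 (proj1 Hord)))) a b l). Qed.

Lemma le_closed (u : nat -> X) psi u0 : (forall n, Vm (u n)) -> (forall n, le (u n) psi) ->
  Vm u0 -> ns_converges V u u0 -> le u0 psi.
Proof. exact (proj2 (proj1 Hord) u psi u0). Qed.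

Lemma V_strictly_convex : is_strictly_convex V.
Proof. exact (proj1 (proj2 Hord)). Qed.

Lemma norm_monotone u v : Vm u -> Vm v -> le vzero u -> le u v -> nrm u <= nrm v.
Proof. exact (proj2 (proj2 Hord) u v). Qed.

Lemma le_nonneg_diff a b : le a b -> le vzero (vsub b a).
Proof.
intros H. assert (H' := le_add_l (vopp a) a b H).
replace (vadd (vopp a) a) with (@vzero X) in H' by vring.
replace (vadd (vopp a) b) with (vsub b a) in H' by vring. exact H'.
Qed.

Lemma le_of_nonneg_diff a b x : le vzero x -> vsub b a = x -> le a b.
Proof.
intros H E. assert (H' := le_add_l a _ _ H).
replace (vadd a vzero) with a in H' by vring.
replace (vadd a x) with b in H' by (rewrite <- E; vring). exact H'.
Qed.

Lemma nonneg_add x y : le vzero x -> le vzero y -> le vzero (vadd x y).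
Proof.
intros Hx Hy. apply gs_le_trans with x; [exact Hx|].
apply le_of_nonneg_diff with y; [exact Hy | vring].
Qed.

Lemma le_add a b c d : le a b -> le c d -> le (vadd a c) (vadd b d).
Proof.
intros H1 H2. apply le_of_nonneg_diff with (vadd (vsub b a) (vsub d c)); [|vring].
apply nonneg_add; apply le_nonneg_diff; auto.
Qed.

Lemma le_opp a b : le a b -> le (vopp b) (vopp a).
Proof. intros H. apply le_of_nonneg_diff with (vsub b a); [apply le_nonneg_diff, H | vring]. Qed.

Lemma closed_in_le_upper psi : closed_in V (fun u => Vm u /\ le u psi).
Proof.
intros u u0 Hu Vu0 Hc. split; [exact Vu0|].
apply (le_closed u psi u0); auto; intros n; apply (Hu n).
Qed.

(* Lower sets are closed because [-] reverses the order. *)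
Lemma closed_in_le_lower psi : closed_in V (fun u => Vm u /\ le psi u).
Proof.
intros u u0 Hu Vu0 Hc. split; [exact Vu0|].
assert (H : le (vopp u0) (vopp psi)).
{ apply (le_closed (fun n => vopp (u n))); [| | apply ns_mem_opp; auto |].
  - intros n; apply ns_mem_opp, (Hu n).
  - intros n; apply le_opp, (Hu n).
  - apply (ns_converges_ext V u u0); auto. intros n.
    replace (vsub (vopp (u n)) (vopp u0)) with (vopp (vsub (u n) u0)) by vring.
    apply ns_norm_opp, ns_mem_sub; [apply (Hu n) | exact Vu0]. }
apply le_opp in H. replace (vopp (vopp u0)) with u0 in H by vring.
replace (vopp (vopp psi)) with psi in H by vring. exact H.
Qed.

Lemma convex_le_upper psi : convex (fun u => Vm u /\ le u psi).
Proof.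
intros x y l [Vx Hx] [Vy Hy] Hl. split.
- apply ns_mem_add; apply ns_mem_scal; auto.
- assert (H := le_add _ _ _ _ (le_scal _ _ l Hx ltac:(lra)) (le_scal _ _ (1 - l) Hy ltac:(lra))).
  replace (vadd (vscal l psi) (vscal (1 - l) psi)) with psi in H by vring. exact H.
Qed.

Lemma convex_le_lower psi : convex (fun u => Vm u /\ le psi u).
Proof.
intros x y l [Vx Hx] [Vy Hy] Hl. split.
- apply ns_mem_add; apply ns_mem_scal; auto.
- assert (H := le_add _ _ _ _ (le_scal _ _ l Hx ltac:(lra)) (le_scal _ _ (1 - l) Hy ltac:(lra))).
  replace (vadd (vscal l psi) (vscal (1 - l) psi)) with psi in H by vring. exact H.
Qed.

Lemma Omega_iff u1 u2 u :
  Omega G le u1 u2 u <-> (Vm u /\ le u1 u) /\ (Vm u /\ le u2 u).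
Proof. unfold Omega; tauto. Qed.

Lemma Omega'_iff u1 u2 v :
  Omega' G le u1 u2 v <-> ((Vm v /\ le vzero v) /\ (Vm v /\ le v u1)) /\ (Vm v /\ le v u2).
Proof. unfold Omega'; tauto. Qed.

Lemma max_exists u1 u2 : Vplus G le u1 -> Vplus G le u2 -> exists m, is_max G le u1 u2 m.
Proof.
intros [V1 P1] [V2 P2].
set (K := fun u => (Vm u /\ le u1 u) /\ (Vm u /\ le u2 u)).
assert (K_sub : forall c, K c -> Vm c) by (intros c [[H _] _]; exact H).
assert (K_convex : convex K) by (apply convex_and; apply convex_le_lower).
assert (K_closed : closed_in V K) by (apply closed_in_and; apply closed_in_le_lower).
assert (K_ne : exists k, K k).
{ exists (vadd u1 u2). split; split; try (apply ns_mem_add; auto).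
  - apply le_of_nonneg_diff with u2; [exact P2 | vring].
  - apply le_of_nonneg_diff with u1; [exact P1 | vring]. }
destruct (norm_minimizer_exists V K K_sub K_convex K_closed (gV_reflexive G) K_ne)
  as (m & Km & Hm).
exists m. split; [|split].
- apply Omega_iff, Km.
- intros w Hw. apply Hm, Omega_iff, Hw.
- intros w Hw Hw'. apply (norm_minimizer_unique V K K_sub K_convex); auto.
  + apply V_strictly_convex.
  + apply Omega_iff, Hw.
  + intros z Kz. apply Hw', Omega_iff, Kz.
Qed.

Lemma min_exists u1 u2 : Vplus G le u1 -> Vplus G le u2 -> exists v, is_min G le u1 u2 v.
Proof.
intros H1 H2. destruct (max_exists u1 u2 H1 H2) as [M HM].
assert (VM : Vm M) by apply (proj1 HM).
set (K := fun v => ((Vm v /\ le vzero v) /\ (Vm v /\ le v u1)) /\ (Vm v /\ le v u2)).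
assert (K_sub : forall c, K c -> Vm c) by (intros v [[[H _] _] _]; exact H).
assert (K_convex : convex K)
  by (apply convex_and; [apply convex_and; [apply convex_le_lower|]|]; apply convex_le_upper).
assert (K_closed : closed_in V K)
  by (apply closed_in_and; [apply closed_in_and; [apply closed_in_le_lower|]|];
      apply closed_in_le_upper).
assert (K_ne : K vzero).
{ repeat split; try apply ns_mem_0; [apply gs_le_refl | apply (proj2 H1) | apply (proj2 H2)]. }
destruct (nearest_point_exists V K K_sub K_convex K_closed M VM (gV_reflexive G) (ex_intro _ _ K_ne))
  as (v & Kv & Hv).
exists v, M. split; [exact HM|]. split.
- split; [apply Omega'_iff, Kv|]. intros w Kw. apply Hv, Omega'_iff, Kw.
- intros w [Kw Hw]. apply (nearest_point_unique V K K_sub K_convex M VM); auto.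
  + apply V_strictly_convex.
  + apply Omega'_iff, Kw.
  + intros z Kz. apply Hw, Omega'_iff, Kz.
Qed.

Lemma Vplus_lub_eq_max u1 u2 v m : Vplus G le u1 ->
  is_Vplus_lub G le u1 u2 v -> is_max G le u1 u2 m -> v = m.
Proof.
intros [_ P1] ([Vv Pv] & L1 & L2 & Lv) (_ & _ & Muniq).
apply Muniq; [repeat split; auto|]. intros w (Vw & W1 & W2).
apply norm_monotone; auto. apply Lv; auto. split; [exact Vw | apply gs_le_trans with u1; auto].
Qed.

Lemma Vplus_glb_eq_min u1 u2 g v :
  is_Vplus_glb G le u1 u2 g -> is_min G le u1 u2 v -> g = v.
Proof.
intros ([Vg Pg] & G1 & G2 & Lg) (M & ([VM [M1 M2]] & _) & _ & Huniq).
apply Huniq. split; [repeat split; auto|].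
intros w (Vw & Pw & W1 & W2). apply norm_monotone.
- apply ns_mem_sub; auto.
- apply ns_mem_sub; auto.
- apply le_nonneg_diff, gs_le_trans with u1; auto.
- apply le_of_nonneg_diff with (vsub g w); [apply le_nonneg_diff, Lg; [split|..]; auto | vring].
Qed.

(* The reflection [x |-> u1 + u2 - x] exchanges upper and lower bounds. *)
Lemma Vplus_glb_of_lub u1 u2 m : Vplus G le u1 -> Vplus G le u2 ->
  is_Vplus_lub G le u1 u2 m -> is_Vplus_glb G le u1 u2 (vsub (vadd u1 u2) m).
Proof.
intros [V1 P1] [V2 P2] ([Vm' Pm] & L1 & L2 & Lm).
set (s := vadd u1 u2).
assert (Vs : Vm s) by (apply ns_mem_add; auto).
assert (ms : le m s).
{ apply Lm; [split; [exact Vs | apply nonneg_add; auto]|..].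
  - apply le_of_nonneg_diff with u2; [exact P2 | unfold s; vring].
  - apply le_of_nonneg_diff with u1; [exact P1 | unfold s; vring]. }
split; [split|split; [|split]].
- apply ns_mem_sub; auto.
- apply le_nonneg_diff, ms.
- apply le_of_nonneg_diff with (vsub m u2); [apply le_nonneg_diff, L2 | unfold s; vring].
- apply le_of_nonneg_diff with (vsub m u1); [apply le_nonneg_diff, L1 | unfold s; vring].
- intros w [Vw Pw] W1 W2.
  assert (mt : le m (vsub s w)).
  { apply Lm; [split|..].
    - apply ns_mem_sub; auto.
    - apply le_of_nonneg_diff with (vadd (vsub u1 w) u2);
        [apply nonneg_add; auto; apply le_nonneg_diff, W1 | unfold s; vring].
    - apply le_of_nonneg_diff with (vsub u2 w); [apply le_nonneg_diff, W2 | unfold s; vring].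
    - apply le_of_nonneg_diff with (vsub u1 w); [apply le_nonneg_diff, W1 | unfold s; vring]. }
  apply le_of_nonneg_diff with (vsub (vsub s w) m); [apply le_nonneg_diff, mt | vring].
Qed.

Lemma Vplus_lub_of_glbs u1 u2 :
  (forall w1 w2, Vplus G le w1 -> Vplus G le w2 -> exists g, is_Vplus_glb G le w1 w2 g) ->
  Vplus G le u1 -> Vplus G le u2 -> exists v, is_Vplus_lub G le u1 u2 v.
Proof.
intros Hglb H1 H2.
destruct (Hglb u1 u2 H1 H2) as (g & [Vg Pg] & G1 & G2 & Lg).
destruct H1 as [V1 P1], H2 as [V2 P2].
set (s := vadd u1 u2).
assert (Vs : Vm s) by (apply ns_mem_add; auto).
assert (Ps : le vzero s) by (apply nonneg_add; auto).
exists (vsub s g). split; [split|split; [|split]].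
- apply ns_mem_sub; auto.
- apply le_of_nonneg_diff with (vadd (vsub u1 g) u2);
    [apply nonneg_add; auto; apply le_nonneg_diff, G1 | unfold s; vring].
- apply le_of_nonneg_diff with (vsub u2 g); [apply le_nonneg_diff, G2 | unfold s; vring].
- apply le_of_nonneg_diff with (vsub u1 g); [apply le_nonneg_diff, G1 | unfold s; vring].
- (* An upper bound [u] dominates [h = glb(u, s)], and [s - h] is a lower bound. *)
  intros u [Vu Pu] U1 U2.
  destruct (Hglb u s (conj Vu Pu) (conj Vs Ps)) as (h & [Vh Ph] & Hu & Hs & Lh).
  assert (H1h : le u1 h).
  { apply Lh; [split; auto | exact U1 | apply le_of_nonneg_diff with u2; [exact P2 | unfold s; vring]]. }
  assert (H2h : le u2 h).
  { apply Lh; [split; auto | exact U2 | apply le_of_nonneg_diff with u1; [exact P1 | unfold s; vring]]. }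
  assert (wg : le (vsub s h) g).
  { apply Lg; [split; [apply ns_mem_sub; auto | apply le_nonneg_diff, Hs]|..].
    - apply le_of_nonneg_diff with (vsub h u2); [apply le_nonneg_diff, H2h | unfold s; vring].
    - apply le_of_nonneg_diff with (vsub h u1); [apply le_nonneg_diff, H1h | unfold s; vring]. }
  apply le_of_nonneg_diff with (vadd (vsub u h) (vsub g (vsub s h)));
    [apply nonneg_add; apply le_nonneg_diff; auto | vring].
Qed.
End OrderedGradientSpace.

Theorem mainTheorem17 (G : GradientSpace) (le : gVt G -> gVt G -> Prop)
  (Hord : is_ordered_gs G le) :
  let A := forall u1 u2, Vplus G le u1 -> Vplus G le u2 ->
             exists v, is_Vplus_lub G le u1 u2 v in
  let B := forall u1 u2, Vplus G le u1 -> Vplus G le u2 ->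
             forall m, is_max G le u1 u2 m -> is_Vplus_lub G le u1 u2 m in
  let C := Vplus_lattice G le in
  let D := forall u1 u2, Vplus G le u1 -> Vplus G le u2 ->
             exists v, is_Vplus_glb G le u1 u2 v in
  let E := forall u1 u2, Vplus G le u1 -> Vplus G le u2 ->
             forall m, is_min G le u1 u2 m -> is_Vplus_glb G le u1 u2 m in
  (A <-> B) /\ (A <-> C) /\ (A <-> D) /\ (A <-> E).
Proof.
intros A B C D E.
assert (AD : A -> D).
{ intros HA u1 u2 H1 H2. destruct (HA u1 u2 H1 H2) as [m Hm].
  eexists; apply Vplus_glb_of_lub; eauto. }
assert (DA : D -> A) by (intros HD u1 u2; apply Vplus_lub_of_glbs; auto).
assert (AB : A <-> B).
{ split.
  - intros HA u1 u2 H1 H2 m Hm. destruct (HA u1 u2 H1 H2) as [v Hv].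
    rewrite <- (Vplus_lub_eq_max G le Hord u1 u2 v m H1 Hv Hm). exact Hv.
  - intros HB u1 u2 H1 H2. destruct (max_exists G le Hord u1 u2 H1 H2) as [m Hm]. eauto. }
assert (DE : D <-> E).
{ split.
  - intros HD u1 u2 H1 H2 v Hv. destruct (HD u1 u2 H1 H2) as [g Hg].
    rewrite <- (Vplus_glb_eq_min G le Hord u1 u2 g v Hg Hv). exact Hg.
  - intros HE u1 u2 H1 H2. destruct (min_exists G le Hord u1 u2 H1 H2) as [v Hv]. eauto. }
split; [exact AB | split; [|split; [tauto | tauto]]].
split.
- intros HA u1 u2 H1 H2. split; [apply HA | apply AD]; auto.
- intros HC u1 u2 H1 H2. apply (HC u1 u2 H1 H2).
Qed.
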